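(* Let $M\in\mathrm{rep}\,G_{m,n}$ be arbitrary, let $\ast\in\{ss,cc,tot\}$, and let $i,j$ be vertices of $G_{m,n}$ such that there is a path from $i$ to $j$. Then $$\sum_{I\in\mathbb{I}_{m,n}}\tilde d^\ast_M(I)\cdot\operatorname{rank} V_I(i\to j)=\operatorname{rank} M(i\to j).$$
   Context: Fix a field $K$. For integers $m,n\ge1$, $G_{m,n}$ is the equioriented commutative $m\times n$ grid: the quiver with vertex set $\{(i,j):1\le i\le m,\ 1\le j\le n\}$ and arrows $(i,j)\to(i,j+1)$ and $(i,j)\to(i+1,j)$, bound by all commutativity relations; $\mathrm{rep}\,G_{m,n}$ is its category of finite-dimensional representations over $K$ satisfying the relations. For vertices $s,t$ with a path from $s$ to $t$, $M(s\to t)$ is the composite linear map along any such path (identity if $s=t$). An interval of $G_{m,n}$ is a nonempty full subquiver $I$ which is connected (as an undirected graph) and convex (whenever $x,y\in I_0$ and there are paths $x\to z$, $z\to y$ in $G_{m,n}$, then $z\in I_0$); $\mathbb{I}_{m,n}$ is the set of intervals ordered by inclusion of vertex sets. The interval representation $V_I$ has $K$ at vertices of $I$, $0$ elsewhere, identity maps on arrows inside $I$ and zero maps otherwise. Essential vertices: $I^{ss}_0$ is the set of sources and sinks of the quiver $I$; $I^{cc}_0=I_0\cap(\mathrm{pr}_1(I^{ss}_0)\times\mathrm{pr}_2(I^{ss}_0))$ with $\mathrm{pr}_1,\mathrm{pr}_2$ coordinate projections; $I^{tot}_0=I_0$. Let $KG_{m,n}$ be the $K$-linear category whose objects are the vertices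 and whose morphisms are $K$-linear combinations of paths modulo the commutativity relations; representations are $K$-linear functors $KG_{m,n}\to\mathrm{vect}_K$. For $\ast\in\{ss,cc,tot\}$, $\mathcal{C}^\ast_I$ is the full subcategory of $KG_{m,n}$ on $I^\ast_0$, and $M^\ast_I:=M|_{\mathcal{C}^\ast_I}$. The compressed multiplicity $\bar d^\ast_M(I)$ is the multiplicity of the indecomposable $(V_I)^\ast_I$ as a direct summand of $M^\ast_I$. Let $\mu$ be the Möbius function of the finite poset $\mathbb{I}_{m,n}$ ($\mu([I,I])=1$, $\mu([I,J])=-\sum_{I\le L<J}\mu([I,L])$ for $I<J$), and $\tilde d^\ast_M(I):=\sum_{J\ge I}\mu([I,J])\,\bar d^\ast_M(J)$. *)

From HB Require Import structures.
From mathcomp Require Import all_boot all_order all_algebra.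
From Stdlib Require Import ClassicalEpsilon.
Set Implicit Arguments. Unset Strict Implicit. Unset Printing Implicit Defensive.
Import Order.TTheory GRing.Theory Num.Theory.
Local Open Scope ring_scope.

(* Vertices of the grid G_{m,n}: pairs (i,j), 0-indexed: 'I_m * 'I_n. *)
Definition gvert (m n : nat) : finType := ('I_m * 'I_n)%type.

(* There is a path x -> y in G_{m,n} iff x <= y componentwise. *)
Definition gle m n (x y : gvert m n) : bool :=
  ((x.1 : nat) <= y.1)%N && ((x.2 : nat) <= y.2)%N.

Definition garr m n (x y : gvert m n) : bool :=
  (((x.1 : nat) == y.1) && ((y.2 : nat) == (x.2).+1)) ||
  (((x.2 : nat) == y.2) && ((y.1 : nat) == (x.1).+1)).

(* Representations of G_{m,n}, as K-linear functors KG_{m,n} -> vect_K.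
   Hom(x,y) in KG_{m,n} is K (spanned by the path class) if x <= y, and 0
   otherwise, so a functor is given by spaces K^(dim x) and the images
   mor x y = M(x -> y) of path classes, functorially.  Row-vector
   convention: the composite x -> y -> z is  mor x y *m mor y z. *)
Record rep (K : fieldType) (m n : nat) := Rep {
  rdim : gvert m n -> nat;
  rmor : forall x y : gvert m n, 'M[K]_(rdim x, rdim y);
  rmor_id : forall x, rmor x x = (1%:M)%R;
  rmor_comp : forall x y z, gle x y -> gle y z ->
                rmor x z = rmor x y *m rmor y z;
  rmor0 : forall x y, ~~ gle x y -> rmor x y = 0%R
}.

Definition is_interval m n (I : {set gvert m n}) : bool :=
  [&& I != set0,
      [forall x in I, forall y in I,
         connect (fun a b => [&& a \in I, b \in I & garr a b || garr b a]) x y]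
    & [forall x in I, forall y in I, forall z,
         (gle x z && gle z y) ==> (z \in I)]].

Inductive ess := SS | CC | TOT.

Definition sources m n (I : {set gvert m n}) : {set gvert m n} :=
  [set x in I | [forall y in I, ~~ garr y x]].
Definition sinks m n (I : {set gvert m n}) : {set gvert m n} :=
  [set x in I | [forall y in I, ~~ garr x y]].
Definition ess_ss m n (I : {set gvert m n}) := sources I :|: sinks I.
Definition ess_cc m n (I : {set gvert m n}) : {set gvert m n} :=
  [set x in I | [exists a in ess_ss I, exists b in ess_ss I,
                   (x.1 == a.1) && (x.2 == b.2)]].
Definition ess_set m n (s : ess) (I : {set gvert m n}) : {set gvert m n} :=
  match s with SS => ess_ss I | CC => ess_cc I | TOT => I end.

(* (V_I)^*_I is K at every vertex of S = I^*_0 with identity maps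
   V_I(x -> y) = 1 for x <= y in S.  (V_I)^k is a direct summand of M^*_I
   iff there is a split monomorphism (V_I^*_I)^k -> M^*_I, i.e. natural
   families phi : (V_I^*_I)^k -> M^*_I, psi : M^*_I -> (V_I^*_I)^k with
   psi o phi = id. *)
Definition splits_k (K : fieldType) m n (M : rep K m n)
    (S : {set gvert m n}) (k : nat) : Prop :=
  exists (phi : forall x, 'M[K]_(k, rdim M x))
         (psi : forall x, 'M[K]_(rdim M x, k)),
    (forall x y, x \in S -> y \in S -> gle x y ->
       phi y = phi x *m rmor M x y /\ rmor M x y *m psi y = psi x) /\
    (forall x, x \in S -> phi x *m psi x = (1%:M)%R).

Definition pbool (P : Prop) : bool :=
  if excluded_middle_informative P then true else false.

(* Compressed multiplicity: the multiplicity of (V_I)^*_I as a direct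
   summand of M^*_I, i.e. the largest k with ((V_I)^*_I)^k a direct summand
   (well-defined by Krull-Schmidt; k is bounded by the total dimension). *)
Definition dbar (K : fieldType) m n (M : rep K m n) (s : ess)
    (I : {set gvert m n}) : nat :=
  \max_(k < (\sum_(x : gvert m n) rdim M x).+1
          | pbool (splits_k M (ess_set s I) k)) (k : nat).

(* Moebius function of the poset of intervals ordered by inclusion,
   mu(I,I) = 1, mu(I,J) = - sum_{I <= L < J} mu(I,L); computed with fuel. *)
Fixpoint mu_rec m n (k : nat) (I J : {set gvert m n}) : int :=
  match k with
  | 0 => 0%R
  | k'.+1 =>
      if I == J then 1%R
      else if I \proper J then
        (- \sum_(L : {set gvert m n} | [&& is_interval L, I \subset L
                                          & L \proper J]) mu_rec k' I L)%R
      else 0%R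
  end.
Definition mobius m n (I J : {set gvert m n}) : int := mu_rec #|J|.+1 I J.

Definition dtilde (K : fieldType) m n (M : rep K m n) (s : ess)
    (I : {set gvert m n}) : int :=
  (\sum_(J : {set gvert m n} | is_interval J && (I \subset J))
      mobius I J * (dbar M s J)%:Z)%R.

(* The interval representation V_I: K at vertices of I, 0 elsewhere;
   V_I(x -> y) is the identity when x, y in I, x <= y (the path lies in I by
   convexity), and zero otherwise. *)
Definition VImx (K : fieldType) m n (I : {set gvert m n}) (x y : gvert m n)
  : 'M[K]_(x \in I : nat, y \in I : nat) :=
  \matrix_(a, b) (if gle x y then 1 else 0)%R.

From HB Require Import structures.
From mathcomp Require Import all_boot all_order all_algebra zify.
From Stdlib Require Import ClassicalEpsilon.
Import Order.TTheory GRing.Theory Num.Theory.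
Set Implicit Arguments. Unset Strict Implicit. Unset Printing Implicit Defensive.
Local Open Scope ring_scope.

(* Since rank V_I(i -> j) is 1 exactly when the segment [i, j] lies in I, the
   left-hand side is the sum of dtilde(I) over the intervals I containing
   [i, j], which by Moebius inversion is dbar([i, j]).  The vertices i and j
   are the source and the sink of that segment and every essential vertex lies
   between them, so a split monomorphism from k copies of V_[i,j] into M
   factors the identity of K^k through M(i -> j); conversely a rank
   factorisation of M(i -> j) provides one with k = rank M(i -> j). *)

(* Read f and g as #|A| x #|A| matrices: a one-sided inverse is two-sided. *)
Lemma sum_kernel_mulC (R : comPzRingType) (T : finType) (A : {pred T})
    (f g : T -> T -> R) :
  {in A &, forall x y, \sum_(z in A) f x z * g z y = (x == y)%:R} ->
  {in A &, forall x y, \sum_(z in A) g x z * f z y = (x == y)%:R}.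
Proof.
move=> fg x y xA yA.
pose F : 'M[R]_#|A| := \matrix_(a, b) f (enum_val a) (enum_val b).
pose G : 'M[R]_#|A| := \matrix_(a, b) g (enum_val a) (enum_val b).
have FG : F *m G = 1%:M.
  apply/matrixP => a b; rewrite !mxE -(inj_eq enum_val_inj).
  rewrite -(fg _ _ (enum_valP a) (enum_valP b)) [RHS]big_enum_val.
  by apply: eq_bigr => c _; rewrite !mxE.
have /matrixP/(_ (enum_rank_in xA x) (enum_rank_in xA y)) := mulmx1C FG.
rewrite !mxE (can_in_eq (enum_rankK_in xA)) // => <-.
rewrite big_enum_val; apply: eq_bigr => c _.
by rewrite !mxE !enum_rankK_in.
Qed.

Section Moebius.
Variables m n : nat.
Implicit Types I J L : {set gvert m n}.

Lemma mu_rec_fuel k1 k2 I J : (#|J| < k1)%N -> (#|J| < k2)%N ->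
  mu_rec k1 I J = mu_rec k2 I J.
Proof.
elim: k1 k2 J => [|k1 IH] [|k2] J //= lt1 lt2.
case: (I == J) => //; case: (I \proper J) => //.
congr (- _); apply: eq_bigr => L /and3P[_ _ /proper_card ltLJ].
by apply: IH; apply: leq_trans ltLJ _.
Qed.

Lemma mobiusE I J : mobius I J =
  if I == J then 1 else if I \proper J then
   - \sum_(L | [&& is_interval L, I \subset L & L \proper J]) mobius I L
  else 0.
Proof.
rewrite {1}/mobius /=; case: (I == J) => //; case: (I \proper J) => //.
congr (- _); apply: eq_bigr => L /and3P[_ _ /proper_card ltLJ].
by apply: mu_rec_fuel => //; apply: leq_trans ltLJ _.
Qed.

Lemma mobius_eq0 I J : ~~ (I \subset J) -> mobius I J = 0.
Proof.
move=> nIJ; rewrite mobiusE; case: eqP => [eIJ|_]; first by rewrite eIJ subxx in nIJ.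
by case: ifP => // /proper_sub; rewrite (negbTE nIJ).
Qed.

Definition zeta I J : int := (I \subset J)%:R.

Lemma sum_mobius_zeta I J : is_interval I -> is_interval J ->
  \sum_(L | is_interval L) mobius I L * zeta L J = (I == J)%:R.
Proof.
move=> intI intJ.
have -> : \sum_(L | is_interval L) mobius I L * zeta L J =
          \sum_(L | is_interval L && ((I \subset L) && (L \subset J))) mobius I L.
  rewrite [RHS]big_mkcondr; apply: eq_bigr => L _; rewrite /zeta.
  by case: (L \subset J); case: (boolP (I \subset L)) => IL;
     rewrite ?mulr1 ?mulr0 // mobius_eq0.
case: eqP => [<-|nIJ].
  rewrite (big_pred1 I) ?mobiusE ?eqxx // => L.
  by rewrite -eqEsubset eq_sym /=; case: eqP => [->|]; rewrite ?intI ?andbF.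
case: (boolP (I \subset J)) => IJ; last first.
  rewrite big_pred0 // => L; apply/negP => /and3P[_ IL LJ].
  by rewrite (subset_trans IL LJ) in IJ.
have pIJ : I \proper J by rewrite properEneq IJ andbT; apply/eqP.
rewrite (bigD1 J) ?intJ ?IJ //= [mobius I J]mobiusE ifN_eq ?pIJ; last exact/eqP.
apply/eqP; rewrite addrC subr_eq0 eq_sym; apply/eqP/eq_bigl => L.
by rewrite properEneq; case: (L =P J) => [->|]; rewrite ?andbF ?andbT -?andbA.
Qed.

Lemma sum_zeta_mobius I J : is_interval I -> is_interval J ->
  \sum_(L | is_interval L) zeta I L * mobius L J = (I == J)%:R.
Proof.
exact: (sum_kernel_mulC (A := [pred L | is_interval L]) (@sum_mobius_zeta)).
Qed.

End Moebius.

Section Segment.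
Variables m n : nat.
Implicit Types (x y i j : gvert m n) (I : {set gvert m n}).

Definition rect i j : {set gvert m n} := [set z | gle i z && gle z j].

Lemma gle_refl x : gle x x.
Proof. by rewrite /gle !leqnn. Qed.

Lemma gle_trans y x z : gle x y -> gle y z -> gle x z.
Proof. by rewrite /gle; lia. Qed.

Lemma mem_rect i j z : (z \in rect i j) = gle i z && gle z j.
Proof. by rewrite inE. Qed.

Lemma rect_lbound i j : gle i j -> i \in rect i j.
Proof. by move=> ij; rewrite mem_rect gle_refl. Qed.

Lemma rect_ubound i j : gle i j -> j \in rect i j.
Proof. by move=> ij; rewrite mem_rect gle_refl andbT. Qed.

Lemma rect_source i j : gle i j -> i \in sources (rect i j).
Proof.
move=> ij; rewrite inE rect_lbound //=; apply/forall_inP => y.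
by rewrite mem_rect /gle /garr => /andP[/andP[? ?] _]; apply/negP; lia.
Qed.

Lemma rect_sink i j : gle i j -> j \in sinks (rect i j).
Proof.
move=> ij; rewrite inE rect_ubound //=; apply/forall_inP => y.
by rewrite mem_rect /gle /garr => /andP[_ /andP[? ?]]; apply/negP; lia.
Qed.

Lemma rect_subset I i j : is_interval I -> gle i j ->
  (rect i j \subset I) = (i \in I) && (j \in I).
Proof.
move=> /and3P[_ _ /forall_inP convI] ij; apply/subsetP/andP => [sub|[iI jI] z].
  by split; apply: sub; rewrite ?rect_lbound ?rect_ubound.
rewrite mem_rect => izj.
by move/forall_inP/(_ j jI)/forallP/(_ z)/implyP: (convI i iI); apply.
Qed.

Lemma rect_arrow_in i j x : x \in rect i j -> x != i ->
  exists2 y, y \in rect i j & garr y x.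
Proof.
case: x i => [[a ltam] [b ltbn]] [[a0 ?] [b0 ?]].
rewrite mem_rect /gle /= => /andP[/andP[a0a b0b] /andP[? ?]] xi.
have [ltb0b|leb_b0] := ltnP b0 b.
  have ltb : (b.-1 < n)%N by lia.
  exists (Ordinal ltam, Ordinal ltb); rewrite ?mem_rect /gle /garr /=; lia.
have lta : (a.-1 < m)%N by lia.
have lta0a : (a0 < a)%N.
  rewrite ltn_neqAle a0a andbT; apply: contraNneq xi => ea.
  by apply/eqP; congr pair; apply: val_inj => /=; lia.
exists (Ordinal lta, Ordinal ltbn); rewrite ?mem_rect /gle /garr /=; lia.
Qed.

Definition gadj I : rel (gvert m n) :=
  fun a b => [&& a \in I, b \in I & garr a b || garr b a].

Lemma gadj_sym I : symmetric (gadj I).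
Proof. by move=> a b; rewrite /gadj andbCA orbC. Qed.

Lemma rect_connect i j x : gle i j -> x \in rect i j ->
  connect (gadj (rect i j)) i x.
Proof.
move=> ij; pose h (z : gvert m n) := (z.1 + z.2)%N.
elim: (h x).+1 {-2}x (ltnSn (h x)) => // k IH {}x hx xR.
have [->|xi] := eqVneq x i; first exact: connect0.
have [y yR yx] := rect_arrow_in xR xi.
apply: connect_trans (IH y _ yR) (connect1 _); last by rewrite /gadj yR xR yx.
by move: yx hx; rewrite /garr /h; lia.
Qed.

Lemma rect_interval i j : gle i j -> is_interval (rect i j).
Proof.
move=> ij; apply/and3P; split.
- by apply/set0Pn; exists i; rewrite rect_lbound.
- apply/forall_inP => x xR; apply/forall_inP => y yR.
  apply: (connect_trans (y := i)); last exact: rect_connect.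
  by rewrite (sym_connect_sym (gadj_sym _)) rect_connect.
- apply/forall_inP => x; rewrite mem_rect => /andP[ix _].
  apply/forall_inP => y; rewrite mem_rect => /andP[_ yj].
  apply/forallP => z; apply/implyP => /andP[xz zy].
  by rewrite mem_rect (gle_trans ix xz) (gle_trans zy yj).
Qed.

End Segment.

Section Essential.
Variables m n : nat.
Implicit Types I : {set gvert m n}.

Lemma ess_ss_sub I : ess_ss I \subset I.
Proof. by apply/subsetP => x; rewrite !inE => /orP[] /andP[]. Qed.

Lemma ess_set_sub s I : ess_set s I \subset I.
Proof.
case: s => /=; [exact: ess_ss_sub | | exact: subxx].
by apply/subsetP => x; rewrite inE => /andP[].
Qed.

Lemma ess_ss_sub_ess_set s I : ess_ss I \subset ess_set s I.
Proof.
case: s => /=; [exact: subxx | | exact: ess_ss_sub].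
apply/subsetP => x xE; rewrite inE (subsetP (ess_ss_sub I)) //=.
by apply/exists_inP; exists x => //; apply/exists_inP; exists x; rewrite ?eqxx.
Qed.

End Essential.

Lemma pboolP (P : Prop) : reflect P (pbool P).
Proof. by rewrite /pbool; case: excluded_middle_informative => h; constructor. Qed.

Section Splitting.
Variables (K : fieldType) (m n : nat) (M : rep K m n).
Implicit Types (E : {set gvert m n}) (i j : gvert m n).

Lemma splits_k_leq_rank E i j k : i \in E -> j \in E -> gle i j ->
  splits_k M E k -> (k <= \rank (rmor M i j))%N.
Proof.
move=> iE jE ij [phi [psi [nat_phi_psi split]]].
have id_k : phi i *m rmor M i j *m psi j = 1%:M.
  by have [<- _] := nat_phi_psi i j iE jE ij; exact: split.
rewrite -[k](mxrank1 K) -id_k.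
exact: leq_trans (mxrankM_maxl _ _) (mxrankM_maxr _ _).
Qed.

Lemma splits_k_rank E i j : gle i j -> E \subset rect i j ->
  splits_k M E (\rank (rmor M i j)).
Proof.
move=> ij /subsetP sub_ij; have hE x : x \in E -> gle i x && gle x j.
  by move/sub_ij; rewrite mem_rect.
set A := rmor M i j; set r := \rank A.
pose phi0 : 'M[K]_(r, rdim M i) := pid_mx r *m invmx (col_ebase A).
pose psi0 : 'M[K]_(rdim M j, r) := invmx (row_ebase A) *m pid_mx r.
have id_r : phi0 *m A *m psi0 = 1%:M.
  rewrite /phi0 /psi0 -{2}(mulmx_ebase A) !mulmxA mulmxKV ?col_ebase_unit //.
  rewrite mulmxK ?row_ebase_unit // -/r.
  rewrite (@pid_mx_id K r (rdim M i) (rdim M j) r (rank_leq_row A)).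
  by rewrite (@pid_mx_id K r (rdim M j) r r (rank_leq_col A)) pid_mx_1.
exists (fun x => phi0 *m rmor M i x), (fun x => rmor M x j *m psi0); split.
  move=> x y xE yE xy; have /andP[ix xj] := hE x xE; have /andP[iy yj] := hE y yE.
  by rewrite -mulmxA -rmor_comp // mulmxA -rmor_comp.
move=> x xE; have /andP[ix xj] := hE x xE.
by rewrite mulmxA -(mulmxA phi0) -rmor_comp.
Qed.

Lemma dbar_rank s S i j : gle i j ->
  i \in ess_set s S -> j \in ess_set s S -> ess_set s S \subset rect i j ->
  dbar M s S = \rank (rmor M i j).
Proof.
move=> ij iE jE sub_ij; rewrite /dbar.
have ltr : (\rank (rmor M i j) < (\sum_(x : gvert m n) rdim M x).+1)%N.
  by rewrite ltnS (leq_trans (rank_leq_row _)) // (bigD1 i) //= leq_addr.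
apply/eqP; rewrite eqn_leq; apply/andP; split.
  apply/bigmax_leqP => k /pboolP sk; exact: splits_k_leq_rank sk.
have sr : pbool (splits_k M (ess_set s S) (Ordinal ltr)).
  by apply/pboolP; exact: splits_k_rank.
exact: (leq_bigmax_cond (F := fun k : 'I_ _ => (k : nat)) (Ordinal ltr) sr).
Qed.

Lemma dbar_rect s i j : gle i j -> dbar M s (rect i j) = \rank (rmor M i j).
Proof.
move=> ij; have sub_ess := subsetP (ess_ss_sub_ess_set s (rect i j)).
apply: dbar_rank => //.
- by apply: sub_ess; rewrite inE rect_source.
- by apply: sub_ess; rewrite inE rect_sink ?orbT.
- exact: ess_set_sub.
Qed.

End Splitting.

Lemma rank_VImx (K : fieldType) m n (I : {set gvert m n}) (i j : gvert m n) :
  gle i j -> \rank (VImx K I i j) = (i \in I) && (j \in I).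
Proof.
rewrite /VImx => ij; case: (i \in I); case: (j \in I) => /=.
- have -> : \matrix_(a, b) (if gle i j then 1 else 0) = 1%:M :> 'M[K]_1.
    by apply/matrixP => a b; rewrite !mxE ij !ord1.
  exact: mxrank1.
- by apply/eqP; rewrite -leqn0 rank_leq_col.
- by apply/eqP; rewrite -leqn0 rank_leq_row.
- by apply/eqP; rewrite -leqn0 rank_leq_row.
Qed.

Section Inversion.
Variables (K : fieldType) (m n : nat) (M : rep K m n) (s : ess).

Lemma dtildeE I :
  dtilde M s I = \sum_(J | is_interval J) mobius I J * (dbar M s J)%:Z.
Proof.
rewrite /dtilde big_mkcondr; apply: eq_bigr => J _.
by case: (boolP (I \subset J)) => // nIJ; rewrite mobius_eq0 ?mul0r.
Qed.

Lemma sum_zeta_dtilde S : is_interval S ->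
  \sum_(I | is_interval I) zeta S I * dtilde M s I = (dbar M s S)%:Z.
Proof.
move=> intS; under eq_bigr do rewrite dtildeE mulr_sumr.
rewrite exchange_big /=.
under eq_bigr => J intJ.
  under eq_bigr do rewrite mulrA.
  rewrite -big_distrl /= (sum_zeta_mobius intS intJ).
  over.
rewrite (bigD1 S) //= eqxx mul1r big1 ?addr0 // => J /andP[_ nJS].
by rewrite eq_sym (negbTE nJS) mul0r.
Qed.

End Inversion.

Theorem mainTheorem15 (K : fieldType) (m n : nat) (Hm : (0 < m)%N) (Hn : (0 < n)%N)
    (M : rep K m n) (s : ess) (i j : gvert m n) (Hij : gle i j) :
  (\sum_(I : {set gvert m n} | is_interval I)
      dtilde M s I * (\rank (VImx K I i j))%:Z
  = (\rank (rmor M i j))%:Z)%R.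
Proof.
rewrite -(dbar_rect M s Hij) -(sum_zeta_dtilde M s (rect_interval Hij)).
apply: eq_bigr => I intI.
by rewrite rank_VImx // -rect_subset // /zeta natz mulrC.
Qed.
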